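(* Let $C$ and $C'$ be configurations on the same board of $l$ rows and $w$ columns containing $n$ tiles. If $C$ can be reconfigured into $C'$ by a sequence of steps each in direction south or east, then there exists a step sequence $S$ of length $O(n(l+w))$, using only south and east steps, such that applying $S$ to $C$ yields $C'$.
   Context: A board is a rectangular region of the square lattice, formally a partition $B=(O,W)$ of a rectangular set of grid points into open locations $O$ and blocked locations $W$. A tile is a labeled unit square centered on an open location. A configuration $C=(B,P)$ consists of a board $B$ and a set $P$ of tiles, no two at the same location and none at a blocked location. A step in direction $d\in\{N,E,S,W\}$ transforms a configuration as follows: consider translating every tile by one unit in direction $d$; every tile whose translation would land on a blocked location is temporarily added to the blocked set, and this is repeated until no remaining tile's translation lands on a blocked location; then all remaining tiles are translated by one unit in direction $d$. A step sequence is a sequence of directions, applied as successive steps. $C$ can be reconfigured into $C'$ if some step sequence applied to $C$ yields $C'$. *)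

From mathcomp Require Import all_boot.
Set Implicit Arguments. Unset Strict Implicit. Unset Printing Implicit Defensive.

Inductive dir := North | East | South | West.

Definition dir_eqb (a b : dir) : bool :=
  match a, b with
  | North, North | East, East | South, South | West, West => true
  | _, _ => false end.

(* A grid location: (row, column); row 0 is the northernmost row,
   column 0 the westernmost column. *)
Definition loc := (nat * nat)%type.

(* A board with [bl] rows and [bw] columns; the grid points of the board are
   the (r, c) with r < bl, c < bw.  [blocked] marks the blocked locations W
   (its values outside the rectangle are irrelevant). *)
Record board := Board { bl : nat; bw : nat; blocked : loc -> bool }.

Definition is_open (B : board) (p : loc) : bool :=
  [&& p.1 < bl B, p.2 < bw B & ~~ blocked B p].

(* Translation by one unit; None when it would leave the quadrant
   (such a target is never open anyway). *)
Definition shift (d : dir) (p : loc) : option loc :=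
  match d with
  | North => if p.1 is r.+1 then Some (r, p.2) else None
  | South => Some (p.1.+1, p.2)
  | East  => Some (p.1, p.2.+1)
  | West  => if p.2 is c.+1 then Some (p.1, c) else None
  end.

(* A configuration with n (labeled, i.e. distinguishable) tiles:
   tile i sits at location (pos i). *)
Definition config (n : nat) := {ffun 'I_n -> loc}.

Definition valid (B : board) n (C : config n) : Prop :=
  (forall i, is_open B (C i)) /\ injective C.

(* A tile whose translation lands on a blocked location (non-open location,
   or the location of an already-stuck tile) becomes stuck. *)
Definition target_blocked (B : board) n (C : config n) (d : dir)
    (Stk : {set 'I_n}) (i : 'I_n) : bool :=
  match shift d (C i) with
  | None => true
  | Some q => ~~ is_open B q || [exists j in Stk, C j == q]
  end.

Definition stuck_next (B : board) n (C : config n) (d : dir)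
    (Stk : {set 'I_n}) : {set 'I_n} :=
  Stk :|: [set i | target_blocked B C d Stk i].

(* Repeating until stable: the stuck set only grows and has at most n
   elements, so n.+1 iterations reach the fixpoint. *)
Definition stuck (B : board) n (C : config n) (d : dir) : {set 'I_n} :=
  iter n.+1 (stuck_next B C d) set0.

Definition step (B : board) n (C : config n) (d : dir) : config n :=
  [ffun i => if i \in stuck B C d then C i
             else match shift d (C i) with Some q => q | None => C i end].

Definition run (B : board) n (C : config n) (s : seq dir) : config n :=
  foldl (@step B n) C s.

Definition south_east (d : dir) : bool :=
  dir_eqb d South || dir_eqb d East.

From mathcomp Require Import all_boot zify.
Set Implicit Arguments. Unset Strict Implicit.

(* South and east steps move each tile by at most one unit and only increase
   row + column, so the sum of these quantities over all tiles is a potential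
   that every effective step raises by at least one.  It is at most
   n (l + w) on a valid configuration, so after deleting the steps that leave
   the configuration unchanged at most n (l + w) steps remain. *)

Definition coord_sum (p : loc) : nat := p.1 + p.2.

Definition potential n (C : config n) : nat := \sum_(i < n) coord_sum (C i).

Section SouthEastStep.

Variables (B : board) (n : nat) (C : config n) (d : dir).
Hypothesis se_d : south_east d.

Lemma step_south_east_tile i :
  step B C d i = C i \/ coord_sum (step B C d i) = (coord_sum (C i)).+1.
Proof.
rewrite /step ffunE; case: (i \in stuck B C d); first by left.
by case: d se_d => //= _; right; rewrite /coord_sum /=; lia.
Qed.

Lemma coord_sum_step_le i : coord_sum (C i) <= coord_sum (step B C d i).
Proof. by case: (step_south_east_tile i) => ->. Qed.

Lemma potential_step_lt : step B C d != C -> potential C < potential (step B C d).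
Proof.
move=> moved; have [j moved_j] : exists j, step B C d j != C j.
  apply/existsP; apply: contraR moved; rewrite negb_exists => /forallP fixed.
  by apply/eqP/ffunP => j; apply/eqP; rewrite -[_ == _]negbK fixed.
rewrite /potential (bigD1 j) // [X in _ < X](bigD1 j) //=.
case: (step_south_east_tile j) => [e | ->]; first by rewrite e eqxx in moved_j.
by rewrite addSn ltnS leq_add2l; apply: leq_sum => i _; apply: coord_sum_step_le.
Qed.

End SouthEastStep.

Lemma drop_idle_steps (B : board) n (s : seq dir) (C : config n) :
  all south_east s ->
  exists S, [/\ all south_east S, run B C S = run B C s
              & size S + potential C <= potential (run B C s)].
Proof.
elim: s C => [|d s IH] C /=; first by exists [::].
case/andP=> se_d /(IH (step B C d))[S [se_S run_S size_S]].
have [idle | moved] := eqVneq (step B C d) C.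
  by exists S; rewrite idle in run_S size_S *.
exists (d :: S); split=> /=; [by rewrite se_d | by [] |].
by have := potential_step_lt se_d moved; rewrite addSn; lia.
Qed.

Lemma potential_open_le (B : board) n (C : config n) :
  (forall i, is_open B (C i)) -> potential C <= n * (bl B + bw B).
Proof.
move=> open_C; rewrite -[n in n * _]card_ord -sum_nat_const.
by apply: leq_sum => i _; case/and3P: (open_C i) => ? ? _; rewrite /coord_sum; lia.
Qed.

Theorem lemma1 :
  exists c : nat,
    forall (B : board) (n : nat) (C C' : config n),
      valid B C -> valid B C' ->
      (exists s : seq dir, all south_east s /\ run B C s = C') ->
      exists S : seq dir,
        [/\ all south_east S, run B C S = C'
          & size S <= c * (n * (bl B + bw B))].
Proof.
exists 1 => B n C C' _ [open_C' _] [s [se_s run_s]]; subst C'.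
have [S [se_S run_S size_S]] := drop_idle_steps B C se_s.
exists S; split=> //; rewrite mul1n.
apply: leq_trans (potential_open_le open_C').
exact: leq_trans (leq_addr _ _) size_S.
Qed.
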